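(* If $A=(A_n)_{n=0}^\infty$ is an Appell sequence, then (a) the sequence $A^*=(A^*_n)_{n=0}^\infty$ defined by $A^*_n=A_{(1^n)}$ is also an Appell sequence; (b) the Wronskian Appell polynomials for $A$ and $A^*$ satisfy $A^*_\lambda=A_{\lambda'}$ for all partitions $\lambda$, where $\lambda'$ is the conjugate partition; (c) the exponential generating functions satisfy $f_{A^*}(t)=1/f_A(-t)$, or equivalently, $\log f_A(t)=\sum_{k=1}^\infty c_k\frac{t^k}{k!}$ implies $\log f_{A^*}(t)=\sum_{k=1}^\infty (-1)^{k-1}c_k\frac{t^k}{k!}$.
   Context: An Appell sequence is a sequence of polynomials $(A_n)_{n\ge0}$ with $A_0=1$ and $A_n'=nA_{n-1}$ for $n\ge1$; it satisfies $\sum_k A_k(x)t^k/k!=e^{xt}f_A(t)$ for a formal power series $f_A$ with $f_A(0)=1$. For a partition $\lambda$ of length $r$, let $(n_1,\dots,n_r)=(\lambda_r,\lambda_{r-1}+1,\dots,\lambda_1+r-1)$ and $A_\lambda=\operatorname{Wr}[A_{n_1},\dots,A_{n_r}]/\Delta(n_1,\dots,n_r)$, where $\operatorname{Wr}$ is the Wronskian and $\Delta$ the Vandermonde determinant $\prod_{i<j}(x_j-x_i)$. $(1^n)=(1,\dots,1)$ ($n$ ones). *)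

From HB Require Import structures.
From mathcomp Require Import all_boot all_order all_algebra.
Set Implicit Arguments. Unset Strict Implicit. Unset Printing Implicit Defensive.
Import Order.TTheory GRing.Theory Num.Theory.
Local Open Scope ring_scope.

Section Appell.
Variable R : fieldType.

Definition appell (A : nat -> {poly R}) : Prop :=
  A 0%N = 1 /\ forall n : nat, (A n.+1)^`() = (n.+1)%:R *: A n.

(* Formal power series in t, as coefficient sequences (coefficient of t^k). *)
Definition pseries := nat -> R.
Definition ps_one : pseries := fun n => (n == 0%N)%:R.
Definition ps_mul (f g : pseries) : pseries :=
  fun n => \sum_(k < n.+1) f k * g (n - k)%N.
Definition ps_neg_arg (f : pseries) : pseries := fun n => (-1) ^+ n * f n.

(* f is the series f_A with  sum_n A_n(x) t^n/n! = e^{xt} f(t), i.e. comparing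
   coefficients of t^n:  A_n(x)/n! = sum_{k<=n} f_k x^(n-k)/(n-k)!. *)
Definition is_appell_egf (A : nat -> {poly R}) (f : pseries) : Prop :=
  forall n : nat,
    A n = (n`!)%:R *: \sum_(k < n.+1) (f k / ((n - k)`!)%:R) *: 'X^(n - k).

Definition is_partition (l : seq nat) : bool :=
  sorted geq l && all (fun x => 0 < x)%N l.

Definition conj_part (l : seq nat) : seq nat :=
  mkseq (fun j => count (fun x => j < x)%N l) (head 0%N l).

Definition ones (n : nat) : seq nat := nseq n 1%N.

Definition wronskian (r : nat) (P : 'I_r -> {poly R}) : {poly R} :=
  \det (\matrix_(i < r, j < r) (P j)^`(i)).

(* n_j = lambda_{r+1-j} + j - 1 for j = 1..r (0-indexed below). *)
Definition wr_index (l : seq nat) (j : nat) : nat :=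
  (nth 0 l (size l - 1 - j) + j)%N.

Definition vandermonde (r : nat) (x : 'I_r -> R) : R :=
  \prod_(i < r) \prod_(j < r | (i < j)%N) (x j - x i).

Definition wr_appell (A : nat -> {poly R}) (l : seq nat) : {poly R} :=
  let r := size l in
  (vandermonde (fun j : 'I_r => (wr_index l j)%:R))^-1 *:
    wronskian (fun j : 'I_r => A (wr_index l j)).

End Appell.

(* Write h_k = A_k / k! and let e be the sequence with h(t) e(-t) = 1. Up to the
   factor prod_j n_j!, the Wronskian of A_(n_1), ..., A_(n_r) is the Jacobi-Trudi
   determinant det (h_(n_j - i)), and the Vandermonde determinant Delta(n) is the
   same determinant for 1/k!; so A_lambda is a quotient of two Jacobi-Trudi
   determinants. Since the r indices n_j of lambda and s = lambda_1
   complementary indices read off lambda' partition [0, r + s), Jacobi's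
   complementary minor theorem applied to the inverse Toeplitz matrices of h(t)
   and e(-t) turns the determinant of lambda for h into that of lambda' for e,
   up to a sign that depends only on lambda. The sequence 1/k! is self-dual
   (e^t e^-t = 1), so the signs cancel in the quotient. For lambda = (1^n) this
   gives A*_n = n! e_n; then (a) holds because d/dx h = t h forces d/dx e = t e,
   (b) is the duality again, and (c) is h(t) e(-t) = 1 at x = 0. *)

From HB Require Import structures.
From mathcomp Require Import all_boot all_order all_algebra.
From mathcomp Require Import fingroup perm zify ring.

Set Implicit Arguments.
Unset Strict Implicit.
Unset Printing Implicit Defensive.
Import GRing.Theory.

Section ConjugatePartition.
Variable l : seq nat.
Hypothesis l_sorted : sorted geq l.
Local Notation r := (size l).
Local Notation s := (size (conj_part l)).
Local Notation l' := (conj_part l).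

Lemma nth_sorted_geq i j : i <= j -> nth 0 l j <= nth 0 l i.
Proof.
move=> le_ij; case: (ltnP j r) => [lt_jr|]; last by move/(nth_default 0)->.
apply: (sorted_leq_nth (rev_trans leq_trans) leqnn) => //.
by rewrite inE (leq_ltn_trans le_ij).
Qed.

Lemma size_conj_part : s = head 0 l.
Proof. exact: size_mkseq. Qed.

Lemma nth_le_size_conj_part i : nth 0 l i <= s.
Proof. by rewrite size_conj_part -nth0 nth_sorted_geq. Qed.

Lemma nth_conj_part k : nth 0 l' k = count (fun x => k < x) l.
Proof.
case: (ltnP k s) => [|le_sk]; first by rewrite size_conj_part => lt_k; rewrite nth_mkseq.
rewrite nth_default //; apply/esym/eqP; rewrite -leqn0 leqNgt -has_count.
apply/hasPn => x /(nthP 0)[i _ <-]; rewrite -leqNgt.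
exact: leq_trans (nth_le_size_conj_part i) le_sk.
Qed.

Lemma nth_conj_part_le_size k : nth 0 l' k <= r.
Proof. by rewrite nth_conj_part count_size. Qed.

Lemma nth_conj_part_sorted k1 k2 : k1 <= k2 -> nth 0 l' k2 <= nth 0 l' k1.
Proof.
by move=> le_k; rewrite !nth_conj_part; apply: sub_count => x /=; exact: leq_ltn_trans.
Qed.

Lemma ltn_nth_conj_part i k : (k < nth 0 l i) = (i < nth 0 l' k).
Proof.
rewrite nth_conj_part; elim: l l_sorted i => [|x t IHt] /= t_sorted i.
  by rewrite nth_nil.
have [x_ge t_sorted'] : all (geq x) t /\ sorted geq t.
  by apply/andP; move: t_sorted; rewrite path_sortedE //; exact: rev_trans leq_trans.
case: (ltnP k x) => [lt_kx|le_xk]; first by case: i => [|i] //=; rewrite add1n ltnS IHt.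
have -> : count (fun y => k < y) t = 0.
  apply/eqP; rewrite -leqn0 leqNgt -has_count; apply/hasPn => y /(allP x_ge) le_yx.
  by rewrite -leqNgt (leq_trans le_yx).
case: i => [|i] /=; first by rewrite ltnNge le_xk.
apply/negbTE; rewrite -leqNgt; apply: leq_trans le_xk.
by case: (ltnP i (size t)) => [/(mem_nth 0)/(allP x_ge)|/(nth_default 0)->].
Qed.

Lemma wr_index_ltn x y : x < y -> y < r -> wr_index l x < wr_index l y.
Proof.
move=> lt_xy lt_yr; rewrite /wr_index.
have : nth 0 l (r - 1 - x) <= nth 0 l (r - 1 - y) by apply: nth_sorted_geq; lia.
lia.
Qed.

Lemma wr_index_lt x : x < r -> wr_index l x < r + s.
Proof. by rewrite /wr_index; have := nth_le_size_conj_part (r - 1 - x); lia. Qed.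

Definition co_index k := r + k - nth 0 l' k.

Lemma co_index_ltn k1 k2 : k1 < k2 -> co_index k1 < co_index k2.
Proof.
rewrite /co_index => lt_k; have := nth_conj_part_sorted (ltnW lt_k).
by have := nth_conj_part_le_size k1; lia.
Qed.

Lemma co_index_lt k : k < s -> co_index k < r + s.
Proof. by move=> lt_ks; rewrite (leq_ltn_trans (leq_subr _ _)) // ltn_add2l. Qed.

Lemma wr_index_neq_co_index j k : j < r -> k < s -> wr_index l j != co_index k.
Proof.
rewrite /wr_index /co_index => lt_jr lt_ks; have := nth_conj_part_le_size k.
case: (ltnP k (nth 0 l (r - 1 - j))) (ltn_nth_conj_part (r - 1 - j) k).
  by move=> lt_k /esym; lia.
by move=> le_k /esym/negbT; rewrite -leqNgt; lia.
Qed.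

End ConjugatePartition.

Section MinorIndices.
Variable l : seq nat.
Local Notation r := (size l).
Local Notation s := (size (conj_part l)).

(* Row and column reindexings of the Toeplitz matrices of size [r + s] that make
   the Jacobi-Trudi matrix of [l] the leading block, and the transposed one of
   [conj_part l], up to signs, the trailing block of the inverse. *)
Definition minor_row x := if x < r then x else r + (r + s - 1 - x).

Lemma minor_row_lt x : x < r + s -> minor_row x < r + s.
Proof. by rewrite /minor_row; case: ifP; lia. Qed.

Lemma minor_row_inj x y : x < r + s -> y < r + s -> minor_row x = minor_row y -> x = y.
Proof. by rewrite /minor_row; case: ifP; case: ifP; lia. Qed.

Hypothesis l_sorted : sorted geq l.

Definition minor_col x := if x < r then wr_index l x else co_index l (r + s - 1 - x).

Lemma minor_col_lt x : x < r + s -> minor_col x < r + s.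
Proof.
rewrite /minor_col; case: ifP => [lt_xr _|/negbT le_rx lt_x]; first exact: (wr_index_lt l_sorted lt_xr).
by apply: co_index_lt; lia.
Qed.

Lemma minor_col_inj x y : x < r + s -> y < r + s -> minor_col x = minor_col y -> x = y.
Proof.
rewrite /minor_col => lt_x lt_y; case: ifP => lt_xr; case: ifP => lt_yr.
- case: (ltngtP x y) => // [lt_xy|lt_yx].
    by have := wr_index_ltn l_sorted lt_xy lt_yr; lia.
  by have := wr_index_ltn l_sorted lt_yx lt_xr; lia.
- have lt_k : r + s - 1 - y < s by lia.
  by move=> E; case/negP: (wr_index_neq_co_index l_sorted lt_xr lt_k); rewrite E.
- have lt_k : r + s - 1 - x < s by lia.
  by move=> E; case/negP: (wr_index_neq_co_index l_sorted lt_yr lt_k); rewrite E.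
- case: (ltngtP x y) => // [lt_xy|lt_yx].
    by have := co_index_ltn l_sorted (_ : r + s - 1 - y < r + s - 1 - x); lia.
  by have := co_index_ltn l_sorted (_ : r + s - 1 - x < r + s - 1 - y); lia.
Qed.

End MinorIndices.

Lemma exists_perm_of_inj n (f : nat -> nat) :
    (forall x, x < n -> f x < n) ->
    (forall x y, x < n -> y < n -> f x = f y -> x = y) ->
  exists p : 'S_n, forall x, val (p x) = f x.
Proof.
move=> f_lt f_inj; pose g (x : 'I_n) := Ordinal (f_lt x (ltn_ord x)).
have g_inj : injective g.
  by move=> x y /(congr1 val) /f_inj eq_xy; apply/val_inj/eq_xy.
by exists (perm g_inj) => x; rewrite permE.
Qed.

Local Open Scope ring_scope.

Section Convolution.
Variable T : comPzRingType.
Implicit Types a b h e : nat -> T.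

(* [ps_mul] and [ps_neg_arg], generalized to any commutative ring. *)
Definition conv a b n : T := \sum_(i < n.+1) a i * b (n - i)%N.
Definition neg_arg a n : T := (-1) ^+ n * a n.
Definition shift a n : T := if n is m.+1 then a m else 0.

(* [h(t) e(-t) = 1] for the generating series of [h] and [e]. *)
Definition dual_seq h e := forall n, conv h (neg_arg e) n = (n == 0)%:R.

Lemma signrB m n : (m <= n)%N -> (-1) ^+ (n - m) = (-1) ^+ m * (-1) ^+ n :> T.
Proof. by move=> le_mn; rewrite -exprD -signr_odd -[RHS]signr_odd oddB // oddD addbC. Qed.

Lemma convC a b n : conv a b n = conv b a n.
Proof.
rewrite /conv (reindex_inj rev_ord_inj); apply: eq_bigr => i _ /=.
by rewrite subKn 1?mulrC // -ltnS.
Qed.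

Lemma eq_convl a1 a2 b n : a1 =1 a2 -> conv a1 b n = conv a2 b n.
Proof. by move=> eq_a; apply: eq_bigr => i _; rewrite eq_a. Qed.

Lemma convDr a b c n : conv a (fun k => b k + c k) n = conv a b n + conv a c n.
Proof. by rewrite /conv -big_split; apply: eq_bigr => i _; rewrite mulrDr. Qed.

Lemma conv_shiftl a b n : conv (shift a) b n = shift (conv a b) n.
Proof.
by case: n => [|n]; rewrite /conv ?big_ord1 ?mul0r // big_ord_recl mul0r add0r.
Qed.

Lemma conv_shiftr a b n : conv a (shift b) n = shift (conv a b) n.
Proof. by rewrite convC conv_shiftl; case: n => // n; rewrite /= convC. Qed.

Lemma conv_eq0 h b : h 0%N = 1 -> (forall n, conv h b n = 0) -> forall n, b n = 0.
Proof.
move=> h0 hb; elim/ltn_ind => n IHn; move: (hb n).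
rewrite /conv big_ord_recl h0 mul1r subn0 big1 ?addr0 // => i _.
by rewrite IHn ?mulr0 //; case: n {hb IHn} i => [[]|n i] //; rewrite subSS ltnS leq_subr.
Qed.

Lemma dual_seqC h e : dual_seq h e -> dual_seq e h.
Proof.
move=> he n; have E : (-1) ^+ n * conv (neg_arg h) e n = (n == 0)%:R.
  rewrite -(he n) /conv mulr_sumr; apply: eq_bigr => i _.
  by rewrite /neg_arg signrB -1?ltnS //; ring.
rewrite convC -[LHS](signrMK n) E.
by case: n {he E} => [|n]; rewrite ?expr0 ?mul1r ?mulr0.
Qed.

Lemma dual_seq0 h e : h 0%N = 1 -> dual_seq h e -> e 0%N = 1.
Proof. by move=> h0 /(_ 0%N); rewrite /conv big_ord1 h0 /neg_arg expr0 !mul1r. Qed.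

Fixpoint series_inv_upto h n : seq T :=
  if n is m.+1 then
    let g := series_inv_upto h m in
    rcons g (- \sum_(i < m.+1) h i.+1 * g`_(m - i))
  else [:: 1].

Definition series_inv h n := (series_inv_upto h n)`_n.

Lemma size_series_inv_upto h n : size (series_inv_upto h n) = n.+1.
Proof. by elim: n => //= n IHn; rewrite size_rcons IHn. Qed.

Lemma nth_series_inv_upto h n k : (k <= n)%N -> (series_inv_upto h n)`_k = series_inv h k.
Proof.
elim: n => [|n IHn]; first by rewrite leqn0 => /eqP->.
rewrite leq_eqVlt => /predU1P[->//|lt_kn].
by rewrite /= nth_rcons size_series_inv_upto lt_kn IHn.
Qed.

Lemma series_invS h n :
  series_inv h n.+1 = - \sum_(i < n.+1) h i.+1 * series_inv h (n - i).
Proof.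
rewrite /series_inv /= nth_rcons size_series_inv_upto ltnn eqxx; congr (- _).
by apply: eq_bigr => i _; rewrite nth_series_inv_upto // leq_subr.
Qed.

Lemma dual_seq_series_inv h : h 0%N = 1 -> dual_seq h (neg_arg (series_inv h)).
Proof.
move=> h0 n; rewrite /conv; under eq_bigr do rewrite /neg_arg signrMK.
case: n => [|n]; first by rewrite big_ord1 h0 mul1r.
by rewrite big_ord_recl h0 mul1r subn0 series_invS addNr.
Qed.

End Convolution.

Lemma dual_seq_rmorph (T U : comPzRingType) (f : {rmorphism T -> U}) (h e : nat -> T) :
  dual_seq h e -> dual_seq (f \o h) (f \o e).
Proof.
move=> he n; rewrite -(rmorph_nat f) -(he n) rmorph_sum; apply: eq_bigr => i _.
by rewrite /neg_arg /= !rmorphM rmorph_sign.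
Qed.

Section FactorialSeries.
Variable R : fieldType.
Hypothesis charR0 : [pchar R] =i pred0.

Definition invfact n : R := (n`!%:R)^-1.

Lemma natr_fact_neq0 n : n`!%:R != 0 :> R.
Proof. by rewrite ((pcharf0P R).1 charR0) -lt0n fact_gt0. Qed.

Lemma invfact0 : invfact 0 = 1.
Proof. by rewrite /invfact fact0 invr1. Qed.

(* [e^t e^(-t) = 1], i.e. the binomial expansion of [(1 - 1)^n]. *)
Lemma dual_seq_invfact : dual_seq invfact invfact.
Proof.
move=> n; apply: (mulIf (natr_fact_neq0 n)); rewrite mulr_suml.
have -> : (n == 0)%:R * n`!%:R = (n == 0)%:R :> R by case: n => [|n]; rewrite ?mul1r ?mul0r.
have := exprDn (-1 : R) 1 n; rewrite addNr expr0n => ->.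
apply: eq_bigr => i _; have le_in : (i <= n)%N by rewrite -ltnS.
rewrite expr1n mulr1 mulr_natr -mulr_natl /neg_arg /invfact -(bin_fact le_in) !natrM.
by field; rewrite !natr_fact_neq0.
Qed.

End FactorialSeries.

Section DerivativeDual.
Variable R : comNzRingType.
Implicit Types a b h e : nat -> {poly R}.

Lemma deriv_conv a b n :
  (conv a b n)^`() = conv (fun k => (a k)^`()) b n + conv a (fun k => (b k)^`()) n.
Proof. by rewrite /conv raddf_sum -big_split; apply: eq_bigr => i _; apply: derivM. Qed.

Lemma deriv_neg_arg a n : (neg_arg a n)^`() = neg_arg (fun k => (a k)^`()) n.
Proof. by rewrite /neg_arg -signr_odd; case: odd; rewrite ?mul1r ?mulN1r ?derivN. Qed.

(* Differentiating [h(t) e(-t) = 1] with [h' = t h] gives [e' = t e]. *)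
Lemma dual_seq_deriv h e : h 0%N = 1 -> (forall n, (h n.+1)^`() = h n) ->
  dual_seq h e -> forall n, (e n.+1)^`() = e n.
Proof.
move=> h0 h' he n; pose E := neg_arg e.
have dh k : (h k)^`() = shift h k by case: k => [|k]; rewrite /= ?h0 ?derivC ?h'.
have E'0 : forall k, (E k)^`() + shift E k = 0.
  apply: (conv_eq0 (b := fun k => (E k)^`() + shift E k) h0) => k.
  rewrite convDr conv_shiftr.
  have := congr1 deriv (he k); rewrite deriv_conv (eq_convl _ _ dh) conv_shiftl addrC => ->.
  by rewrite -polyC_natr derivC.
have := E'0 n.+1; rewrite /E deriv_neg_arg /neg_arg /= exprS mulN1r mulNr addrC.
by move/eqP; rewrite subr_eq0 => /eqP/(inv_inj (signrMK n)).
Qed.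

End DerivativeDual.

Section Toeplitz.
Variable T : comPzRingType.
Implicit Types a b h e : nat -> T.

Definition toeplitz_coef a i j : T := if (i <= j)%N then a (j - i)%N else 0.
Definition toeplitz N a : 'M[T]_N := \matrix_(i, j) toeplitz_coef a i j.

Lemma eq_toeplitz_coef a i j i' j' :
  (j + i' = j' + i)%N -> toeplitz_coef a i j = toeplitz_coef a i' j'.
Proof.
move=> E; rewrite /toeplitz_coef (_ : (i <= j)%N = (i' <= j')%N); last by apply/idP/idP; lia.
by case: ifP => // _; congr a; lia.
Qed.

Lemma toeplitz_coef_neg_arg a i j :
  toeplitz_coef (neg_arg a) i j = (-1) ^+ i * toeplitz_coef a i j * (-1) ^+ j.
Proof.
rewrite /toeplitz_coef /neg_arg; case: leqP => [le_ij|]; last by rewrite mulr0 mul0r.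
by rewrite signrB //; ring.
Qed.

Lemma toeplitz_mul N a b : toeplitz N a *m toeplitz N b = toeplitz N (conv a b).
Proof.
apply/matrixP => i k; rewrite !mxE; under eq_bigr do rewrite !mxE.
rewrite {3}/toeplitz_coef; case: leqP => [le_ik|lt_ki]; last first.
  rewrite big1 // => j _; rewrite /toeplitz_coef.
  by case: leqP => [le_ij|]; rewrite ?mul0r // ifN ?mulr0 // -ltnNge (leq_trans lt_ki).
have [lt_iN lt_kN] := (ltn_ord i, ltn_ord k).
rewrite -(big_mkord xpredT (fun j => toeplitz_coef a i j * toeplitz_coef b j k)).
rewrite (big_cat_nat (n := i)) //=; last by lia.
rewrite (big_cat_nat (n := k.+1) (m := i)) //=; last by lia.
rewrite big_nat_cond big1 ?add0r => [|j /andP[/andP[_ lt_ji] _]]; last first.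
  by rewrite /toeplitz_coef leqNgt lt_ji mul0r.
rewrite [X in _ + X]big_nat_cond [X in _ + X]big1 ?addr0 => [|j /andP[/andP[lt_kj _] _]]; last first.
  by rewrite [toeplitz_coef b _ _]/toeplitz_coef leqNgt lt_kj mulr0.
rewrite -{1}[nat_of_ord i]add0n big_addn big_mkord subSn //; apply: eq_bigr => m _.
have le_mk : (m + i <= k)%N by have := ltn_ord m; lia.
by rewrite /toeplitz_coef leq_addl le_mk addnK addnC subnDA.
Qed.

Lemma toeplitz_dual N h e : dual_seq h e -> toeplitz N h *m toeplitz N (neg_arg e) = 1%:M.
Proof.
move=> he; rewrite toeplitz_mul; apply/matrixP => i j.
rewrite !mxE /toeplitz_coef he -val_eqE /=.
case: leqP => [le_ij|lt_ji]; first by rewrite subn_eq0 eqn_leq le_ij.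
by rewrite eqn_leq leqNgt lt_ji.
Qed.

Lemma det_toeplitz N a : \det (toeplitz N a) = a 0%N ^+ N.
Proof.
rewrite -det_tr det_trig; last first.
  by apply/is_trig_mxP => i j lt_ij; rewrite !mxE /toeplitz_coef leqNgt lt_ij.
rewrite -[N in RHS]card_ord -prodr_const; apply: eq_bigr => i _.
by rewrite !mxE /toeplitz_coef leqnn subnn.
Qed.

Definition jacobi_trudi_mx l a : 'M[T]_(size l) :=
  \matrix_(i, j) toeplitz_coef a i (wr_index l j).

Definition jacobi_trudi l a : T := \det (jacobi_trudi_mx l a).

End Toeplitz.

Section MatrixFacts.
Variable T : comPzRingType.

Lemma det_ulsubmx_complement p q (A B : 'M[T]_(p + q)) :
  A *m B = 1%:M -> \det (ulsubmx A) = \det A * \det (drsubmx B).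
Proof.
move=> AB.
have E : A *m block_mx 1%:M (ursubmx B) 0 (drsubmx B)
         = block_mx (ulsubmx A) 0 (dlsubmx A) 1%:M.
  rewrite -{1}[A]submxK mulmx_block !mulmx1 !mulmx0 !addr0.
  move: AB; rewrite -{1}[A]submxK -{1}[B]submxK mulmx_block (scalar_mx_block p q 1).
  by case/eq_block_mx => _ -> _ ->.
have := congr1 determinant E.
by rewrite det_mulmx det_ublock det_lblock !det1 mul1r mulr1 => <-.
Qed.

Lemma mulmx_row_col_perm n (s t : 'S_n) (A B : 'M[T]_n) : A *m B = 1%:M ->
  row_perm t (col_perm s A) *m row_perm s (col_perm t B) = 1%:M.
Proof.
move=> AB; apply/matrixP => i j.
transitivity ((A *m B) (t i) (t j)); last by rewrite AB !mxE (inj_eq perm_inj).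
rewrite !mxE [RHS](reindex_inj (@perm_inj _ s)); apply: eq_bigr => k _.
by rewrite !mxE.
Qed.

Lemma det_row_col_perm n (s t : 'S_n) (A : 'M[T]_n) :
  \det (row_perm t (col_perm s A)) = (-1) ^+ t * (-1) ^+ s * \det A.
Proof.
by rewrite row_permE col_permE !det_mulmx !det_perm odd_permV mulrCA mulrC.
Qed.

Lemma det_scale_cols n (c : 'I_n -> T) (A : 'M[T]_n) :
  \det (\matrix_(i, j) (c j * A i j)) = (\prod_j c j) * \det A.
Proof.
have -> : \matrix_(i, j) (c j * A i j) = A *m diag_mx (\row_j c j).
  by apply/matrixP => i j; rewrite mul_mx_diag !mxE mulrC.
by rewrite det_mulmx det_diag mulrC; congr (_ * _); apply: eq_bigr => j _; rewrite mxE.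
Qed.

End MatrixFacts.

(* The falling factorials [X ^_ i] form a monic basis, so this is the
   Vandermonde determinant after a unitriangular change of rows. *)
Lemma det_ffact (T : comNzRingType) r (x : 'I_r -> nat) :
  \det (\matrix_(i < r, j < r) ((x j) ^_ i)%:R : 'M[T]_r) =
  \prod_(i < r) \prod_(j < r | (i < j)%N) ((x j)%:R - (x i)%:R).
Proof.
pose P (i : nat) : {poly T} := \prod_(0 <= k < i) ('X - (k%:R)%:P).
have Pe i n : (P i).[n%:R] = (n ^_ i)%:R.
  elim: i => [|i IHi]; first by rewrite /P big_geq // hornerC.
  rewrite /P big_nat_recr //= hornerM -/(P i) IHi hornerXsubC ffactnSr natrM.
  by case: (leqP i n) => [le_in|lt_ni]; [rewrite natrB | rewrite ffact_small // !mul0r].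
have Pmon i : P i \is monic by apply: monic_prod_XsubC.
have Psz i : size (P i) = i.+1 by rewrite size_prod_XsubC size_iota subn0.
have -> : \matrix_(i < r, j < r) ((x j) ^_ i)%:R =
    (\matrix_(i < r, k < r) (P i)`_k) *m Vandermonde r (\row_j ((x j)%:R : T)).
  apply/matrixP => i j; rewrite !mxE -Pe (@horner_coef_wide _ r) ?Psz //.
  by apply: eq_bigr => k _; rewrite !mxE.
rewrite det_mulmx det_Vandermonde det_trig; last first.
  by apply/is_trig_mxP => i k lt_ik; rewrite mxE nth_default // Psz.
rewrite big1 ?mul1r => [|i _]; last first.
  by rewrite mxE; have /monicP := Pmon i; rewrite lead_coefE Psz.
by apply: eq_bigr => i _; apply: eq_bigr => j _; rewrite !mxE.
Qed.

Section JacobiTrudiConjugate.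
Variable l : seq nat.
Hypothesis l_sorted : sorted geq l.
Local Notation r := (size l).
Local Notation s := (size (conj_part l)).

Lemma jacobi_trudi_conj_part : exists k, forall (T : comPzRingType) (h e : nat -> T),
  h 0%N = 1 -> dual_seq h e -> jacobi_trudi l h = (-1) ^+ k * jacobi_trudi (conj_part l) e.
Proof.
have [rho rhoE] := exists_perm_of_inj (@minor_row_lt l) (@minor_row_inj l).
have [sigma sigmaE] := exists_perm_of_inj (minor_col_lt l_sorted) (minor_col_inj l_sorted).
exists (rho + sigma + \sum_(p < s) minor_col l (r + p) + \sum_(q < s) minor_row l (r + q))%N.
move=> T h e h0 he.
pose A := row_perm rho (col_perm sigma (toeplitz (r + s) h)).
pose B := row_perm sigma (col_perm rho (toeplitz (r + s) (neg_arg e))).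
have ulA : ulsubmx A = jacobi_trudi_mx l h.
  by apply/matrixP => i j; rewrite !mxE rhoE sigmaE /minor_row /minor_col /= !ltn_ord.
have drB : drsubmx B = diag_mx (\row_p (-1) ^+ minor_col l (r + p)) *m
    (jacobi_trudi_mx (conj_part l) e)^T *m diag_mx (\row_q (-1) ^+ minor_row l (r + q)).
  apply/matrixP => p q; rewrite mul_mx_diag mul_diag_mx !mxE rhoE sigmaE /=.
  rewrite toeplitz_coef_neg_arg; congr (_ * _ * _); apply: eq_toeplitz_coef.
  rewrite /minor_col /minor_row !ltnNge !leq_addr /= /co_index /wr_index.
  rewrite (_ : r + s - 1 - (r + p) = s - 1 - p)%N; last by lia.
  have := nth_conj_part_le_size l_sorted (s - 1 - p).
  by have := ltn_ord p; have := ltn_ord q; lia.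
have AB := mulmx_row_col_perm sigma rho (toeplitz_dual (r + s) he).
rewrite /jacobi_trudi -ulA (det_ulsubmx_complement AB) det_row_col_perm det_toeplitz h0.
rewrite expr1n mulr1 drB !det_mulmx !det_diag det_tr.
under eq_bigr do rewrite mxE; under [X in _ * _ * X]eq_bigr do rewrite mxE.
by rewrite !prodrXr !exprD -!mulrA [\det _ * _]mulrC.
Qed.

End JacobiTrudiConjugate.

Lemma sorted_ones n : sorted geq (ones n).
Proof. by case: n => // n; rewrite /ones /=; elim: n => //= n ->; rewrite leqnn. Qed.

Lemma jacobi_trudi_conj_ones (T : comPzRingType) n (a : nat -> T) :
  a 0%N = 1 -> jacobi_trudi (conj_part (ones n)) a = a n.
Proof.
case: n => [a0|n _]; first by rewrite a0; apply: det_mx00.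
rewrite (_ : conj_part _ = [:: n.+1]); last first.
  by rewrite /conj_part /ones /= /mkseq /= count_nseq /= mul1n add1n.
by rewrite /jacobi_trudi det_mx11 mxE /toeplitz_coef /wr_index /= subn0 addn0.
Qed.

Section Appell.
Variable R : fieldType.
Hypothesis charR0 : [pchar R] =i pred0.
Implicit Types A B : nat -> {poly R}.

Definition divfact A n := invfact R n *: A n.

Lemma invfactS n : invfact R n.+1 * n.+1%:R = invfact R n.
Proof.
rewrite /invfact factS natrM invfM mulrAC mulVf ?mul1r //.
by rewrite ((pcharf0P R).1 charR0).
Qed.

Lemma appell_divfactP A :
  appell A <-> divfact A 0 = 1 /\ forall n, (divfact A n.+1)^`() = divfact A n.
Proof.
have inj_invfact n : injective ( *:%R (invfact R n) : {poly R} -> {poly R}).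
  by apply: scalerI; rewrite invr_eq0 natr_fact_neq0.
rewrite /appell /divfact invfact0 scale1r.
split=> -[-> dA]; split=> // n; first by rewrite derivZ dA scalerA invfactS.
by apply: (inj_invfact n.+1); rewrite /= -derivZ dA scalerA invfactS.
Qed.

Lemma appell_derivn B : appell B ->
  forall i n, (B n)^`(i) = if (i <= n)%N then (n ^_ i)%:R *: B (n - i)%N else 0.
Proof.
case=> B0 dB; elim=> [|i IHi] n; first by rewrite derivn0 subn0 ffactn0 scale1r.
rewrite derivSn; case: n => [|n]; first by rewrite B0 -polyC1 derivC derivn_poly0 ?size_poly0.
rewrite dB derivnZ IHi ltnS subSS ffactSS natrM.
by case: ifP => _; [rewrite scalerA | rewrite scaler0].
Qed.

Lemma natr_ffact n i : (n ^_ i)%:R = n`!%:R * toeplitz_coef (invfact R) i n.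
Proof.
rewrite /toeplitz_coef; case: leqP => [le_in|lt_ni]; last by rewrite ffact_small // mulr0.
by rewrite -(ffact_fact le_in) natrM mulfK // natr_fact_neq0.
Qed.

Lemma wronskian_appell B l : appell B ->
  wronskian (fun j : 'I_(size l) => B (wr_index l j)) =
  (\prod_(j < size l) (wr_index l j)`!)%:R *: jacobi_trudi l (divfact B).
Proof.
move=> Bap; rewrite /wronskian /jacobi_trudi scaler_nat -mulr_natl natr_prod -det_scale_cols.
congr (\det _); apply/matrixP => i j; rewrite !mxE appell_derivn // /toeplitz_coef.
case: ifP => le_ij; last by rewrite mulr0.
by rewrite natr_ffact /toeplitz_coef le_ij [RHS]mulr_natl -scaler_nat /divfact scalerA.
Qed.

Lemma vandermonde_wr_index l :
  vandermonde (fun j : 'I_(size l) => (wr_index l j)%:R) =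
  (\prod_(j < size l) (wr_index l j)`!)%:R * jacobi_trudi l (invfact R).
Proof.
rewrite /vandermonde -det_ffact natr_prod -det_scale_cols; congr (\det _).
by apply/matrixP => i j; rewrite !mxE natr_ffact.
Qed.

Lemma wr_appell_jacobi_trudi B l : appell B ->
  wr_appell B l = (jacobi_trudi l (invfact R))^-1 *: jacobi_trudi l (divfact B).
Proof.
move=> Bap; rewrite /wr_appell wronskian_appell // vandermonde_wr_index.
rewrite scalerA invfM mulrAC mulVf ?mul1r // ((pcharf0P R).1 charR0) -lt0n.
by apply: prodn_gt0 => j; apply: fact_gt0.
Qed.

Lemma jacobi_trudi_quot_conj l (h e : nat -> {poly R}) :
  sorted geq l -> h 0%N = 1 -> dual_seq h e ->
  (jacobi_trudi l (invfact R))^-1 *: jacobi_trudi l h =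
  (jacobi_trudi (conj_part l) (invfact R))^-1 *: jacobi_trudi (conj_part l) e.
Proof.
move=> /jacobi_trudi_conj_part[k jtE] h0 he.
rewrite (jtE _ _ _ (invfact0 R) (dual_seq_invfact charR0)) (jtE _ _ _ h0 he).
rewrite -[(-1) ^+ k : {poly R}](rmorph_sign (@polyC R)) mul_polyC.
by rewrite scalerA invfM mulrAC mulVf ?mul1r // signr_eq0.
Qed.

Lemma divfact_wr_appell_ones A e : appell A -> dual_seq (divfact A) e ->
  forall n, divfact (fun m => wr_appell A (ones m)) n = e n.
Proof.
move=> Aap Ae n; have [A0 _] := (appell_divfactP A).1 Aap.
rewrite /divfact wr_appell_jacobi_trudi // (jacobi_trudi_quot_conj (sorted_ones n) A0 Ae).
rewrite !jacobi_trudi_conj_ones ?invfact0 ?(dual_seq0 A0 Ae) //.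
by rewrite scalerA mulfV ?scale1r // invr_eq0 natr_fact_neq0.
Qed.

Lemma appell_egf_horner0 A f : is_appell_egf A f -> forall n, (divfact A n).[0] = f n.
Proof.
move=> Af n; rewrite /divfact /invfact Af scalerA mulVf ?natr_fact_neq0 // scale1r.
rewrite horner_sum big_ord_recr big1 ?add0r => [|k _]; rewrite /= hornerZ hornerXn expr0n.
  by rewrite subnn fact0 divr1 mulr1 add0r.
by move: (ltn_ord k); rewrite -subn_gt0 lt0n => /negbTE->; rewrite mulr0.
Qed.

Lemma appell_egf_dual A B f g : is_appell_egf A f -> is_appell_egf B g ->
  dual_seq (divfact A) (divfact B) -> dual_seq f g.
Proof.
move=> Af Bg /(dual_seq_rmorph (horner_eval 0)) fg n; rewrite -(fg n).
by apply: eq_bigr => k _; rewrite /neg_arg /= !horner_evalE (appell_egf_horner0 Af) (appell_egf_horner0 Bg).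
Qed.

End Appell.

Unset Implicit Arguments.

Theorem theorem5p5 (R : fieldType) (charR0 : [pchar R] =i pred0)
    (A : nat -> {poly R}) :
  appell A ->
  let Astar := fun n : nat => wr_appell A (ones n) in
  [/\ appell Astar,
      (forall l : seq nat, is_partition l ->
         wr_appell Astar l = wr_appell A (conj_part l))
    & forall fA fAstar : pseries R,
        is_appell_egf A fA -> is_appell_egf Astar fAstar ->
        ps_mul fAstar (ps_neg_arg fA) =1 ps_one R].
Proof.
move=> Aap Astar; have [A0 dA] := (appell_divfactP charR0 A).1 Aap.
have Ae := dual_seq_series_inv A0.
have Astar_e := divfact_wr_appell_ones charR0 Aap Ae.
have AstarA : dual_seq (divfact Astar) (divfact A).
  by move=> n; rewrite (eq_convl _ _ Astar_e) (dual_seqC Ae).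
have Astar0 : divfact Astar 0 = 1 by rewrite Astar_e (dual_seq0 A0 Ae).
have Astar_ap : appell Astar.
  apply/(appell_divfactP charR0); split=> // n; rewrite !Astar_e.
  exact: dual_seq_deriv A0 dA Ae n.
split=> // [l /andP[l_sorted _]|fA fAstar fAE fAstarE].
  by rewrite !wr_appell_jacobi_trudi //; apply: jacobi_trudi_quot_conj.
exact: (appell_egf_dual charR0 fAstarE fAE AstarA).
Qed.
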